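(* Let $n\ge1$. For any $h\in\{1,\dots,n\}$ and $a\in\mathbb{Z}$, the set $T(h,a)$ of all tagged edges of $\mathcal{P}_{n,\infty}$ with starting point $(h,a)$, namely \[T(h,a)=\{E^{+1}_{(h,a),(h,a)},E^{-1}_{(h,a),(h,a)}\}\cup\{E_{(h,a),(k,b)}\mid (k,b)\text{ a boundary marked point with } (k,b)\notin\{(h,a),(h,a+1)\}\},\] is a triangulation of $\mathcal{P}_{n,\infty}$. Likewise, for any $h\in\{1,\dots,n\}$ and $a\in\mathbb{Z}\cup\{\infty\}$, the set of all tagged edges of $\mathcal{P}_{\overline{n,\infty}}$ with starting point $(h,a)$ is a triangulation of $\mathcal{P}_{\overline{n,\infty}}$.
   Context: $\mathcal{P}_{n,\infty}$: the closed unit disk $D$ with a puncture at the origin and boundary marked points $(h,a)$, $h\in\{1,\dots,n\}$, $a\in\mathbb{Z}$, arranged counterclockwise so that block $h$ is ordered by increasing $a$, the blocks appear in cyclic order $1,\dots,n$, and the marked points accumulate from both sides exactly at $n$ unmarked points $a_1,\dots,a_n$ ($a_h$ between block $h$ and block $h+1$, indices mod $n$). $\mathcal{P}_{\overline{n,\infty}}$ is the same but with each accumulation point $a_h$ also a marked point, labeled $(h,\infty)$, with the convention $\infty\pm k=\infty$. For a boundary marked point $P=(h,a)$ write $P^+=(h,a+1)$. Tagged edges: for boundary marked points $P\ne Q$ with $Q\ne P^+$, the edge $E_{P,Q}$ is the homotopy class (in $D$ minus the puncture, relative endpoints) of a simple path from $P$ to $Q$ through the interior minus the puncture, homotopic to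 the counterclockwise boundary path from $P$ to $Q$; for each boundary marked point $P$ there are two tagged edges $E^{\pm1}_{P,P}$, drawn as the segment from $P$ to the puncture, tagged when the sign is $-1$. The starting point of $E_{P,Q}$ and of $E^{\pm1}_{P,P}$ is $P$. Crossing number $\mathfrak c(E,F)$ of distinct tagged edges: if neither goes to the puncture, the minimal number of intersection points in the interior of the punctured disk among representatives; if exactly one is a puncture segment, the minimal number of interior intersection points of that segment with representatives of the other; if $E=E^{\epsilon}_{P,P}$, $F=E^{\lambda}_{Q,Q}$, then $\mathfrak c=1$ if $P\ne Q$ and $\epsilon\ne\lambda$, and $0$ otherwise. $E$ crosses $F$ if $\mathfrak c(E,F)\ne0$. A triangulation is a maximal set of pairwise non-crossing tagged edges. *)

From mathcomp Require Import all_boot all_order all_algebra.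
Set Implicit Arguments. Unset Strict Implicit. Unset Printing Implicit Defensive.
Import Order.TTheory GRing.Theory Num.Theory.

(* A boundary point (h,a): h is the block (1 <= h <= n), a is Some k for
   k : int, or None for the label oo. *)
Definition pt := (nat * option int)%type.

(* [bar] selects the surface: false = P_{n,oo}, true = P_{bar(n,oo)}. *)
Definition marked (bar : bool) (n : nat) (P : pt) : bool :=
  [&& 1 <= P.1, P.1 <= n & (bar || (P.2 != None))].

(* P^+ , with the convention oo + 1 = oo *)
Definition succ_pt (P : pt) : pt :=
  match P.2 with Some a => (P.1, Some (a + 1)%R) | None => P end.

(* order inside a block: increasing integers, oo (accumulation point a_h,
   lying between block h and block h+1) after all of them *)
Definition ltA (x y : option int) : bool :=
  match x, y with
  | Some a, Some b => (a < b)%R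
  | Some _, None => true
  | None, _ => false
  end.

(* linear order obtained by cutting the counterclockwise boundary circle just
   before block 1 (i.e. just after a_n) *)
Definition ltP (P Q : pt) : bool :=
  (P.1 < Q.1) || ((P.1 == Q.1) && ltA P.2 Q.2).
Definition leP (P Q : pt) : bool := ltP P Q || (P == Q).

(* cle R X Y : travelling counterclockwise from R, one meets X no later than Y *)
Definition cle (R X Y : pt) : bool :=
  if ltP X R == ltP Y R then leP X Y else ~~ ltP X R.

(* sub P Q R S : the closed counterclockwise boundary interval [P,Q] is
   contained in the closed counterclockwise boundary interval [R,S] *)
Definition sub (P Q R S : pt) : bool := cle R P Q && cle R Q S.

Definition in_open (Q R X : pt) : bool := [&& X != Q, X != R & cle Q X R].

(* tagged edges: Arc P Q = E_{P,Q};  Seg P true = E^{+1}_{P,P},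
   Seg P false = E^{-1}_{P,P} (tagged) *)
Inductive tedge := Arc of pt & pt | Seg of pt & bool.

Definition start (E : tedge) : pt :=
  match E with Arc P _ => P | Seg P _ => P end.

Definition is_tedge (bar : bool) (n : nat) (E : tedge) : Prop :=
  match E with
  | Arc P Q => marked bar n P /\ marked bar n Q /\ P <> Q /\ Q <> succ_pt P
  | Seg P _ => marked bar n P
  end.

Definition crosses (E F : tedge) : bool :=
  match E, F with
  | Arc P Q, Arc R S0 => ~~ [|| sub P Q R S0, sub R S0 P Q | sub R S0 Q P]
  | Seg P _, Arc Q R => in_open Q R P
  | Arc Q R, Seg P _ => in_open Q R P
  | Seg P e, Seg Q l => (P != Q) && (e != l)
  end.

Definition compatible (bar : bool) (n : nat) (T : tedge -> Prop) : Prop :=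
  (forall E, T E -> is_tedge bar n E) /\
  (forall E F, T E -> T F -> E <> F -> ~~ crosses E F).

Definition triangulation (bar : bool) (n : nat) (T : tedge -> Prop) : Prop :=
  compatible bar n T /\
  (forall T' : tedge -> Prop, (forall E, T E -> T' E) -> compatible bar n T' ->
     forall E, T' E -> T E).

Definition edges_from (bar : bool) (n : nat) (P : pt) : tedge -> Prop :=
  fun E => is_tedge bar n E /\ start E = P.

(* Edges out of P0 never cross: two arcs from P0 span nested boundary
   intervals, and two puncture segments at the same point never cross.
   Conversely, every tagged edge E not starting at P0 crosses one of them.
   If E is a puncture segment at P <> P0, it crosses the oppositely tagged
   segment at P0.  If E = E_{P,Q} and P0 lies strictly inside the boundary
   interval (P,Q), E crosses the segment at P0; otherwise pick a marked X
   strictly inside (P,Q) (P^+, or the predecessor of Q when P is an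
   accumulation point): then E_{P0,X} is a tagged edge, because P0^+ cannot
   enter (P,Q) unless P0 = P, and it crosses E. *)
From Pilot Require Import Defs.
Set Implicit Arguments. Unset Strict Implicit.
From mathcomp Require Import all_boot all_order all_algebra.
Import Order.TTheory GRing.Theory Num.Theory.
(* Order.TTheory exports its own [ltP]; restore the boundary order. *)
Import Defs.

Lemma ltAxx x : ltA x x = false.
Proof. by case: x => [a|] //=; rewrite ltxx. Qed.

Lemma ltA_trans x y z : ltA x y -> ltA y z -> ltA x z.
Proof. by case: x => [a|]; case: y => [b|]; case: z => [c|] //=; apply: lt_trans. Qed.

Lemma ltA_total x y : x != y -> ltA x y || ltA y x.
Proof.
case: x => [a|]; case: y => [b|] //= hab.
by apply: lt_total; apply: contra hab => /eqP ->.
Qed.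

Lemma ltPxx P : ltP P P = false.
Proof. by rewrite /ltP ltnn eqxx ltAxx. Qed.

Lemma ltP_trans P Q R : ltP P Q -> ltP Q R -> ltP P R.
Proof.
case: P => p1 p2; case: Q => q1 q2; case: R => r1 r2; rewrite /ltP /=.
case/orP => [h1|/andP[/eqP e1 h1]]; case/orP => [h2|/andP[/eqP e2 h2]].
- by rewrite (ltn_trans h1 h2).
- by rewrite -e2 h1.
- by rewrite e1 h2.
- by rewrite e1 e2 eqxx (ltA_trans h1 h2) orbT.
Qed.

Lemma ltP_total P Q : P != Q -> ltP P Q || ltP Q P.
Proof.
case: P => p1 p2; case: Q => q1 q2; rewrite /ltP /= => hne.
case: (ltngtP p1 q1) => //= e; subst.
by apply: ltA_total; apply: contra hne => /eqP ->.
Qed.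

Lemma ltP_asym P Q : P != Q -> ltP Q P = ~~ ltP P Q.
Proof.
move=> hPQ; case: (boolP (ltP P Q)) => hlt /=.
  by apply/negP => hgt; have := ltP_trans hlt hgt; rewrite ltPxx.
by have := ltP_total hPQ; rewrite (negbTE hlt).
Qed.

Lemma ltP_trans_imply P Q R : ltP P Q ==> ltP Q R ==> ltP P R.
Proof. by apply/implyP => hPQ; apply/implyP; apply: ltP_trans. Qed.

Lemma ltP_succ P a : P.2 = Some a -> ltP P (succ_pt P).
Proof. by case: P => p1 p2 /= ->; rewrite /ltP /succ_pt /= eqxx ltrDl ltr01 orbT. Qed.

Lemma ltP_succ_gap P a Y : P.2 = Some a -> ltP P Y -> ltP Y (succ_pt P) = false.
Proof.
case: P => p1 p2 /= ->; case: Y => y1 y2; rewrite /ltP /succ_pt /=.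
case/orP => [h1|/andP[/eqP<- h1]]; apply/negP; case/orP => [h2|/andP[/eqP e2 h2]].
- by move: (ltn_trans h1 h2); rewrite ltnn.
- by move: h1; rewrite e2 ltnn.
- by move: h2; rewrite ltnn.
- by case: y2 h1 h2 => [y|] //= h1; rewrite ltzD1 leNgt h1.
Qed.

(* Every statement below about [cle], [in_open] and [crosses] is a Boolean
   combination of [ltP]-comparisons between three or four distinct points.
   These tactics put all comparisons in the form [ltP X Y] with X before Y
   in the argument list, add all transitivity instances, and enumerate the
   truth values of the remaining comparisons. *)
Ltac unfold_cyclic := rewrite /crosses /in_open /sub /cle /leP ?ltPxx ?eqxx.

Ltac neq_from_context A B :=
  first [ have : A != B by assumption
        | have : A != B by rewrite eq_sym; assumption ].

Ltac orient A B :=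
  neq_from_context A B;
  let hneq := fresh "hneq" in
  move=> hneq; rewrite ?(eq_sym B A) ?(negbTE hneq) ?(ltP_asym hneq); clear hneq.

Ltac transitivity_facts A B C :=
  move: (@ltP_trans_imply A B C) (@ltP_trans_imply A C B)
        (@ltP_trans_imply B A C) (@ltP_trans_imply B C A)
        (@ltP_trans_imply C A B) (@ltP_trans_imply C B A).

Ltac cyclic_cases3 A B C :=
  transitivity_facts A B C; unfold_cyclic;
  orient A B; orient A C; orient B C;
  case: (ltP A B); case: (ltP A C); case: (ltP B C) => //=.

Ltac cyclic_cases4 A B C D :=
  transitivity_facts A B C; transitivity_facts A B D;
  transitivity_facts A C D; transitivity_facts B C D; unfold_cyclic;
  orient A B; orient A C; orient A D; orient B C; orient B D; orient C D;
  case: (ltP A B); case: (ltP A C); case: (ltP B C);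
  case: (ltP A D); case: (ltP B D); case: (ltP C D) => //=.

Lemma cle_refl R X : cle R R X.
Proof.
case: (eqVneq R X) => [->|hRX]; first by unfold_cyclic.
by unfold_cyclic; rewrite (negbTE hRX) (ltP_asym hRX); case: (ltP R X).
Qed.

Lemma cle_total R X Y : cle R X Y || cle R Y X.
Proof.
rewrite /cle /leP; case: (eqVneq X Y) => [->|hXY]; first by rewrite eqxx !orbT.
by rewrite (ltP_asym hXY); case: (ltP X R); case: (ltP Y R); case: (ltP X Y).
Qed.

Lemma Arc_common_start_ncross P Q S : ~~ crosses (Arc P Q) (Arc P S).
Proof. by rewrite /crosses negbK /sub !cle_refl /= orbA cle_total. Qed.

Lemma in_open_succ P Q P0 :
  P != Q -> P0 != P -> ~~ in_open P Q P0 -> ~~ in_open P Q (succ_pt P0).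
Proof.
move=> hPQ hP0P hP0; apply/negP => hX.
case eP0: P0.2 => [a|]; last by move: hX; rewrite /succ_pt eP0 (negbTE hP0).
set X := succ_pt P0 in hX *.
have lt_P0X : ltP P0 X := ltP_succ eP0.
have gap_P : ~~ (ltP P0 P && ltP P X).
  by apply/negP => /andP[hlt]; rewrite (ltP_succ_gap eP0 hlt).
have gap_Q : ~~ (ltP P0 Q && ltP Q X).
  by apply/negP => /andP[hlt]; rewrite (ltP_succ_gap eP0 hlt).
have hXP0 : X != P0 by apply: contraTneq lt_P0X => ->; rewrite ltPxx.
move: (hX) => /and3P[hXP hXQ _]; clearbody X; clear eP0.
case: (eqVneq P0 Q) => [eQ|hP0Q].
  subst P0; move: hX hP0 lt_P0X gap_P gap_Q.
  by cyclic_cases3 P Q X.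
move: hX hP0 lt_P0X gap_P gap_Q.
by cyclic_cases4 P Q P0 X.
Qed.

Lemma crosses_Arc_in_open P Q P0 X :
  P != Q -> P0 != P -> in_open P Q X -> ~~ in_open P Q P0 ->
  crosses (Arc P Q) (Arc P0 X).
Proof.
move=> hPQ hP0P hX hP0.
have hXP0 : X != P0 by apply: contraNneq hP0 => <-.
move: (hX) => /and3P[hXP hXQ _].
case: (eqVneq P0 Q) => [eQ|hP0Q].
  by subst P0; move: hX hP0; cyclic_cases3 P Q X.
by move: hX hP0; cyclic_cases4 P Q P0 X.
Qed.

Section Surface.

Variables (bar : bool) (n : nat).

Lemma exists_marked_in_open P Q :
  is_tedge bar n (Arc P Q) -> exists2 X, marked bar n X & in_open P Q X.
Proof.
case: P => p [b|] [mP [mQ [/eqP hPQ /eqP hQs]]].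
  set P := (p, Some b); set X := succ_pt P.
  exists X; first by move: mP; rewrite /marked.
  have lt_PX : ltP P X := @ltP_succ P b erefl.
  have gap_Q : ~~ (ltP P Q && ltP Q X).
    by apply/negP => /andP[hlt]; rewrite (@ltP_succ_gap P b _ erefl hlt).
  have hXP : X != P by apply: contraTneq lt_PX => ->; rewrite ltPxx.
  have hXQ : X != Q by rewrite eq_sym.
  by move: lt_PX gap_Q; cyclic_cases3 P Q X.
set c := if Q.2 is Some d then (d - 1)%R else 0%R.
exists (Q.1, Some c).
  by move: mQ; rewrite /marked /= !orbT => /andP[-> /andP[-> _]].
set P := (p, None); set X := (Q.1, Some c).
have lt_XQ : ltP X Q.
  by rewrite /X /ltP /= eqxx ltnn /c; case: (Q.2) => [d|] //=; rewrite gtrBl ltr01.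
have lt_PX : ltP P Q ==> ltP P X.
  by apply/implyP; rewrite /ltP /=; case/orP => [->|/andP[_ //]].
have hXP : X != P by apply/eqP => -[].
have hXQ : X != Q by apply: contraTneq lt_XQ => ->; rewrite ltPxx.
by move: lt_XQ lt_PX; cyclic_cases3 P Q X.
Qed.

Lemma edges_from_compatible P0 : compatible bar n (edges_from bar n P0).
Proof.
split=> [E [] //|E F [_ sE] [_ sF] hEF].
case: E sE hEF => [P Q|P e] /= ->; case: F sF => [R S|R l] /= -> hEF.
- exact: Arc_common_start_ncross.
- by rewrite /crosses /in_open eqxx.
- by rewrite /crosses /in_open eqxx.
- by rewrite /crosses eqxx.
Qed.

Lemma crosses_some_edge_from P0 E :
  marked bar n P0 -> is_tedge bar n E -> start E != P0 ->
  exists2 F, edges_from bar n P0 F & crosses E F.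
Proof.
move=> mP0; case: E => [P Q|P e] /= hE hP.
- case: (boolP (in_open P Q P0)) => hP0; first by exists (Seg P0 true).
  have [X mX hX] := exists_marked_in_open hE.
  have [_ [_ [/eqP hPQ _]]] := hE.
  exists (Arc P0 X); last by apply: crosses_Arc_in_open; rewrite // eq_sym.
  split=> //=; do !split=> //.
    by apply/eqP; apply: contraNneq hP0 => ->.
  move=> eX; move: hX; rewrite eX; apply/negP.
  by apply: in_open_succ; rewrite // eq_sym.
- exists (Seg P0 (~~ e)) => //.
  by rewrite /crosses hP; case: e.
Qed.

Lemma edges_from_triangulation P0 :
  marked bar n P0 -> triangulation bar n (edges_from bar n P0).
Proof.
move=> mP0; split=> [|T sT [isT cT] E TE]; first exact: edges_from_compatible.
split; first exact: isT.
apply/eqP; apply: contraT => hE.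
have [F [isF sF] cEF] := crosses_some_edge_from mP0 (isT _ TE) hE.
have hEF : E <> F by move=> eEF; rewrite eEF sF eqxx in hE.
by move: (cT _ _ TE (sT F (conj isF sF)) hEF); rewrite cEF.
Qed.

End Surface.

Theorem lemma4p2 (n : nat) (hn : 1 <= n) :
  (forall (h : nat) (a : int), 1 <= h <= n ->
     triangulation false n (edges_from false n (h, Some a))) /\
  (forall (h : nat) (a : option int), 1 <= h <= n ->
     triangulation true n (edges_from true n (h, a))).
Proof.
by split=> h a /andP[h_ge1 h_len]; apply: edges_from_triangulation;
  rewrite /marked /= h_ge1 h_len.
Qed.
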